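(* For every nonempty face $F$ of $V_0$, the codimension of $F$ in $\mathcal F$ equals $\operatorname{genus}(\phi(F))$.
   Context: Let $\mathcal M$ be a regular matroid on a finite ground set $E$, represented by a totally unimodular matrix $M$ with columns $c_e$; $\mathcal F=\ker M\subseteq\mathbb R^E$ with Euclidean inner product, $\Lambda=\ker M\cap\mathbb Z^E$, $V_0=\{x\in\mathcal F:\|x\|\le\|x-\lambda\|\ \forall\lambda\in\Lambda\}$. A circuit in $\Lambda$ is a flow with coordinates in $\{-1,0,1\}$ whose support is a circuit (minimal dependent set of columns) of $\mathcal M$; $\Xi$ is the set of these; $F_\gamma=\{x\in\mathcal F:2\langle x,\gamma\rangle=\|\gamma\|^2\}$. For a nonempty face $F$ of $V_0$, $\mathcal U(F)=\{\gamma\in\Xi:F\subseteq F_\gamma\}$ and $\phi(F)=(S,\varepsilon)$ with $S=\bigcup_{\gamma\in\mathcal U(F)}\operatorname{supp}\gamma$ and $\varepsilon_e=\operatorname{sgn}\gamma_e$ for any $\gamma\in\mathcal U(F)$ containing $e$ (well defined). The genus of $(S,\varepsilon)$ is $\dim\ker M_S$, $M_S$ being the submatrix of columns indexed by $S$. *)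

From HB Require Import structures.
From mathcomp Require Import all_boot all_order all_algebra.
From mathcomp Require Import boolp reals.
Set Implicit Arguments. Unset Strict Implicit. Unset Printing Implicit Defensive.
Import Order.TTheory GRing.Theory Num.Theory.
Local Open Scope ring_scope.

Section Defs.
Variables (R : realType) (m n : nat).
(* Ground set E = 'I_n; M : 'M_(m,n) with columns c_e = col e M.
   Vectors of R^E are row vectors 'rV[R]_n, so M x = 0 reads x *m M^T = 0. *)

Definition dotp (x y : 'rV[R]_n) : R := \sum_(e < n) x 0 e * y 0 e.
Definition normsq (x : 'rV[R]_n) : R := dotp x x.

Definition totally_unimodular (M : 'M[R]_(m, n)) : Prop :=
  forall (k : nat) (f : 'I_k -> 'I_m) (g : 'I_k -> 'I_n),
    injective f -> injective g ->
    let d := \det (mxsub f g M) in d = 0 \/ d = 1 \/ d = -1.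

Definition colsubS (M : 'M[R]_(m, n)) (S : {set 'I_n}) : 'M[R]_(m, #|S|) :=
  colsub (fun i : 'I_#|S| => enum_val i) M.

Definition in_flows (M : 'M[R]_(m, n)) (x : 'rV[R]_n) : Prop := x *m M^T = 0.
Definition dim_flows (M : 'M[R]_(m, n)) : nat := \rank (kermx M^T).

Definition in_lattice (M : 'M[R]_(m, n)) (x : 'rV[R]_n) : Prop :=
  in_flows M x /\ forall e, exists z : int, x 0 e = z%:~R.

Definition V0 (M : 'M[R]_(m, n)) (x : 'rV[R]_n) : Prop :=
  in_flows M x /\ forall l, in_lattice M l -> normsq x <= normsq (x - l).

(* matroid of the columns: S dependent iff the columns indexed by S are
   linearly dependent; circuits are minimal dependent sets *)
Definition dependent (M : 'M[R]_(m, n)) (S : {set 'I_n}) : Prop :=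
  ~~ row_free (colsubS M S)^T.
Definition is_circuit (M : 'M[R]_(m, n)) (S : {set 'I_n}) : Prop :=
  dependent M S /\ forall T : {set 'I_n}, T \proper S -> ~ dependent M T.

Definition supp (x : 'rV[R]_n) : {set 'I_n} := [set e | x 0 e != 0].

Definition circuit_flow (M : 'M[R]_(m, n)) (g : 'rV[R]_n) : Prop :=
  in_flows M g /\ (forall e, g 0 e = 0 \/ g 0 e = 1 \/ g 0 e = -1) /\
  is_circuit M (supp g).

Definition Fgamma (M : 'M[R]_(m, n)) (g x : 'rV[R]_n) : Prop :=
  in_flows M x /\ 2 * dotp x g = normsq g.

(* faces of a convex set V: V itself or V ∩ supporting hyperplane
   (c = 0, b = 0 gives V itself); for a polytope these are all faces *)
Definition is_face (V F : 'rV[R]_n -> Prop) : Prop :=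
  exists (c : 'rV[R]_n) (b : R),
    (forall x, V x -> dotp c x <= b) /\
    (forall x, F x <-> (V x /\ dotp c x = b)).

Definition Ucirc (M : 'M[R]_(m, n)) (F : 'rV[R]_n -> Prop) (g : 'rV[R]_n) : Prop :=
  circuit_flow M g /\ forall x, F x -> Fgamma M g x.

(* first component S of phi(F) = (S, eps) *)
Definition phiS (M : 'M[R]_(m, n)) (F : 'rV[R]_n -> Prop) : {set 'I_n} :=
  [set e | `[< exists g, Ucirc M F g /\ g 0 e != 0 >] ].

(* sign component eps of phi(F) (value on e \notin S irrelevant: 0) *)
Definition phiEps (M : 'M[R]_(m, n)) (F : 'rV[R]_n -> Prop) (e : 'I_n) : R :=
  if pselect (exists g, Ucirc M F g /\ g 0 e != 0) is left P
  then Num.sg ((projT1 (cid P)) 0 e) else 0.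

Definition genus (M : 'M[R]_(m, n)) (S : {set 'I_n}) (eps : 'I_n -> R) : nat :=
  \rank (kermx (colsubS M S)^T).

(* d = dimension of the affine hull of F *)
Definition affine_dim (F : 'rV[R]_n -> Prop) (d : nat) : Prop :=
  exists2 x0, F x0 &
    (exists U : 'M[R]_n, \rank U = d /\ forall x, F x -> (x - x0 <= U)%MS) /\
    (forall U : 'M[R]_n, (forall x, F x -> (x - x0 <= U)%MS) -> (d <= \rank U)%N).

Definition codim_in_flows (M : 'M[R]_(m, n)) (F : 'rV[R]_n -> Prop) (c : nat) : Prop :=
  exists d, affine_dim F d /\ (d + c)%N = dim_flows M.

End Defs.

From HB Require Import structures.
From mathcomp Require Import all_boot all_order all_algebra.
From mathcomp Require Import boolp reals.
From mathcomp Require Import zify ring lra.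
From Stdlib Require Import Classical.
Set Implicit Arguments. Unset Strict Implicit. Unset Printing Implicit Defensive.
Import Order.TTheory GRing.Theory Num.Theory.
Local Open Scope ring_scope.

(* By Cramer's rule and total unimodularity, every flow
      whose support is a circuit is a nonzero multiple of a {0,1,-1} flow.
   2. Conformal decomposition.  Every flow y is a nonnegative combination of
      circuit flows conformal to y.  Hence if 2<x,g> <= |g|^2 for all circuit
      flows g, then 2<x,y> <= |y|_1 for every flow y, with equality only if it
      holds on every circuit used.  As |l|_1 <= |l|^2 for integer vectors, V0
      is cut out by the circuit inequalities alone.
   3. The elements of U(F) are pairwise sign-consistent, so their sum w has
      |w_e| >= 1 on S; for a flow z supported on S the flows w + tz and w - tz
      are tight on F, so z lies in the row space B of U(F): rank B = genus.
   4. A point of F strict on all circuits outside U(F) can move inside F in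
      every direction of D = ker M cap B^perp, and F moves only inside D, so
      dim F = dim D = dim ker M - rank B (rows of M and B are orthogonal).
*)

Section InnerProduct.
Variables (R : realType) (n : nat).
Implicit Types (x y z : 'rV[R]_n).

Lemma dotpE x y : dotp x y = (x *m y^T) 0 0.
Proof. by rewrite /dotp !mxE; apply: eq_bigr => e _; rewrite mxE. Qed.

Lemma dotpC x y : dotp x y = dotp y x.
Proof. by rewrite /dotp; apply: eq_bigr => e _; rewrite mulrC. Qed.

Lemma dotpDr x y z : dotp x (y + z) = dotp x y + dotp x z.
Proof. by rewrite /dotp -big_split; apply: eq_bigr => e _; rewrite mxE mulrDr. Qed.

Lemma dotpZr x a y : dotp x (a *: y) = a * dotp x y.
Proof. by rewrite /dotp mulr_sumr; apply: eq_bigr => e _; rewrite mxE mulrCA. Qed.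

Lemma dotpNr x y : dotp x (- y) = - dotp x y.
Proof. by rewrite -scaleN1r dotpZr mulN1r. Qed.

Lemma dotpBr x y z : dotp x (y - z) = dotp x y - dotp x z.
Proof. by rewrite dotpDr dotpNr. Qed.

Lemma dotpDl x y z : dotp (y + z) x = dotp y x + dotp z x.
Proof. by rewrite !(dotpC _ x) dotpDr. Qed.

Lemma dotpZl x a y : dotp (a *: y) x = a * dotp y x.
Proof. by rewrite !(dotpC _ x) dotpZr. Qed.

Lemma dotpBl x y z : dotp (y - z) x = dotp y x - dotp z x.
Proof. by rewrite !(dotpC _ x) dotpBr. Qed.

Lemma dotp_sumr I (r : seq I) (P : pred I) (F : I -> 'rV[R]_n) x :
  dotp x (\sum_(i <- r | P i) F i) = \sum_(i <- r | P i) dotp x (F i).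
Proof.
apply: (big_morph (dotp x)); first exact: dotpDr.
by rewrite /dotp big1 // => e _; rewrite mxE mulr0.
Qed.

Lemma normsq_eq0 x : normsq x = 0 -> x = 0.
Proof.
rewrite /normsq /dotp => /eqP; rewrite psumr_eq0 => [/allP H|e _]; last first.
  by rewrite -expr2 sqr_ge0.
apply/rowP => e; rewrite mxE; have := H e (mem_index_enum e).
by rewrite /= mulf_eq0 orbb => /eqP.
Qed.

Lemma normsqB x l : normsq (x - l) = normsq x - 2 * dotp x l + normsq l.
Proof. by rewrite /normsq dotpBl !dotpBr (dotpC l x); ring. Qed.

(* the l1 norm, which agrees with normsq on {0,1,-1} vectors *)
Definition l1 x : R := \sum_(e < n) `|x 0 e|.

Lemma l1_ge0 x : 0 <= l1 x.
Proof. exact: sumr_ge0. Qed.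

Lemma abs_le_l1 x e : `|x 0 e| <= l1 x.
Proof.
by rewrite /l1 (bigD1 e) //= lerDl; apply: sumr_ge0 => i _; exact: normr_ge0.
Qed.

Lemma supp0 x : supp x = set0 -> x = 0.
Proof.
move=> E; apply/rowP => e; rewrite mxE; apply/eqP/negPn/negP => ne.
have : e \in supp x by rewrite inE.
by rewrite E inE.
Qed.

Lemma suppN0 x : x != 0 -> exists e, e \in supp x.
Proof. by move=> nx; apply/set0Pn; apply: contra nx => /eqP /supp0 ->. Qed.

Lemma supp_scale (a : R) x : a != 0 -> supp (a *: x) = supp x.
Proof. by move=> a0; apply/setP => e; rewrite !inE mxE mulf_eq0 negb_or a0. Qed.

End InnerProduct.

Section CoordinateProjection.
Variables (R : realType) (m n : nat).

Lemma in_flowsD (M : 'M[R]_(m, n)) (y z : 'rV[R]_n) :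
  in_flows M y -> in_flows M z -> in_flows M (y + z).
Proof. by rewrite /in_flows mulmxDl => -> ->; rewrite addr0. Qed.

Lemma in_flowsZ (M : 'M[R]_(m, n)) (a : R) (y : 'rV[R]_n) :
  in_flows M y -> in_flows M (a *: y).
Proof. by rewrite /in_flows -scalemxAl => ->; rewrite scaler0. Qed.

Lemma in_flowsB (M : 'M[R]_(m, n)) (y z : 'rV[R]_n) :
  in_flows M y -> in_flows M z -> in_flows M (y - z).
Proof. by move=> fy fz; rewrite -scaleN1r; apply/in_flowsD/in_flowsZ. Qed.

(* Pm S is the coordinate matrix of S: v *m (Pm S)^T restricts v to S and
   u *m Pm S extends u by zero outside S. *)
Definition Pm (S : {set 'I_n}) : 'M[R]_(#|S|, n) :=
  \matrix_(i, e) (enum_val i == e)%:R.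

Lemma colsubS_trE (M : 'M[R]_(m, n)) (S : {set 'I_n}) :
  (colsubS M S)^T = Pm S *m M^T.
Proof.
apply/matrixP => i r; rewrite !mxE (bigD1 (enum_val i)) //= big1.
  by rewrite !mxE eqxx mul1r addr0.
by move=> e /negPf ne; rewrite !mxE eq_sym ne mul0r.
Qed.

Lemma Pm_orth (S : {set 'I_n}) : Pm S *m (Pm S)^T = 1%:M.
Proof.
apply/matrixP => i j; rewrite !mxE (bigD1 (enum_val i)) //= big1.
  by rewrite !mxE eqxx mul1r addr0 (inj_eq enum_val_inj) eq_sym.
by move=> e /negPf ne; rewrite !mxE eq_sym ne mul0r.
Qed.

Lemma Pm_free (S : {set 'I_n}) : row_free (Pm S).
Proof. by apply/row_freeP; exists (Pm S)^T; exact: Pm_orth. Qed.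

Lemma restrictK (S : {set 'I_n}) (v : 'rV[R]_n) :
  supp v \subset S -> v *m (Pm S)^T *m Pm S = v.
Proof.
move=> /subsetP sS; apply/rowP => e; rewrite mxE.
case: (boolP (e \in S)) => eS.
  rewrite (bigD1 (enum_rank_in eS e)) //= big1 => [|i ni].
    rewrite !mxE enum_rankK_in // eqxx mulr1 addr0 (bigD1 e) //= big1.
      by rewrite !mxE enum_rankK_in // eqxx mulr1 addr0.
    by move=> e' /negPf ne; rewrite !mxE enum_rankK_in // eq_sym ne mulr0.
  rewrite !mxE; case: eqP => [E|]; last by rewrite mulr0.
  by case/eqP: ni; apply: enum_val_inj; rewrite E enum_rankK_in.
have -> : v 0 e = 0 by apply/eqP; apply: contraNT eS => ve; apply: sS; rewrite inE.
by rewrite big1 // => i _; rewrite !mxE; case: eqP => [E|]; rewrite ?mulr0 //;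
  move: eS (enum_valP i); rewrite E => /negPf ->.
Qed.

Lemma supp_extend (S : {set 'I_n}) (u : 'rV[R]_#|S|) : supp (u *m Pm S) \subset S.
Proof.
apply/subsetP => e; rewrite inE mxE; apply: contraR => eS.
rewrite big1 // => i _; rewrite !mxE; case: eqP => [E|]; last by rewrite mulr0.
by move: eS (enum_valP i); rewrite E => /negPf ->.
Qed.

Lemma extendK (S : {set 'I_n}) (u : 'rV[R]_#|S|) : u *m Pm S *m (Pm S)^T = u.
Proof. by rewrite -mulmxA Pm_orth mulmx1. Qed.

Lemma ker_colsubS (M : 'M[R]_(m, n)) (S : {set 'I_n}) (u : 'rV[R]_#|S|) :
  (u <= kermx (colsubS M S)^T)%MS = (u *m Pm S *m M^T == 0).
Proof. by rewrite colsubS_trE -mulmxA; apply/sub_kermxP/eqP. Qed.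

Lemma dependentP (M : 'M[R]_(m, n)) (S : {set 'I_n}) :
  dependent M S <-> exists v, v != 0 /\ in_flows M v /\ supp v \subset S.
Proof.
rewrite /dependent -kermx_eq0; split.
  rewrite -submx0 => /row_subPn [i]; rewrite submx0 => ni.
  set u := row i _ in ni.
  have uk : u *m Pm S *m M^T == 0 by rewrite -ker_colsubS row_sub.
  exists (u *m Pm S); split; [|split; [exact/eqP | exact: supp_extend]].
  by apply: contra ni => /eqP E; rewrite -(extendK u) E mul0mx.
move=> [v [nv [fv sv]]]; apply/negP => /eqP K.
have : (v *m (Pm S)^T <= kermx (colsubS M S)^T)%MS.
  by rewrite ker_colsubS restrictK // fv.
rewrite K submx0 => /eqP E.
by move/negP: nv; apply; rewrite -(restrictK sv) E mul0mx.
Qed.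

Lemma rank_supported_flows (M : 'M[R]_(m, n)) (S : {set 'I_n}) k (B : 'M[R]_(k, n)) :
  (forall i, in_flows M (row i B) /\ supp (row i B) \subset S) ->
  (forall z, in_flows M z -> supp z \subset S -> (z <= B)%MS) ->
  \rank B = \rank (kermx (colsubS M S)^T).
Proof.
move=> rowsB spanB; rewrite -(mxrankMfree _ (Pm_free S)).
apply/eqP; rewrite eqn_leq; apply/andP; split; apply: mxrankS; apply/row_subP => i.
  have [fi si] := rowsB i; rewrite -(restrictK si); apply: submxMr.
  by rewrite ker_colsubS restrictK // fi.
rewrite row_mul; apply: spanB; last exact: supp_extend.
by apply/eqP; rewrite -ker_colsubS row_sub.
Qed.

End CoordinateProjection.

Section Cramer.
Variable R : comPzRingType.

Definition repl k (X : 'M[R]_k) (j : 'I_k) (u : 'rV[R]_k) : 'M[R]_k :=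
  \matrix_(r, c) if r == j then u 0 c else X r c.

Lemma cramer k (X : 'M[R]_k) (t : 'rV[R]_k) j :
  \det (repl X j (t *m X)) = t 0 j * \det X.
Proof.
have -> : \det (repl X j (t *m X)) = (t *m X *m \adj X) 0 j.
  rewrite (expand_det_row _ j) [RHS]mxE; apply: eq_bigr => c _.
  rewrite [repl _ _ _ _ _]mxE eqxx [\adj X c j]mxE; congr (_ * (_ * \det _)).
  by apply/matrixP => r s; rewrite !mxE eq_sym (negPf (neq_lift j r)).
by rewrite -mulmxA mul_mx_adj mul_mx_scalar mxE mulrC.
Qed.

End Cramer.

Section Signs.
Variable R : numDomainType.

Definition pm1 (a : R) := a = 0 \/ a = 1 \/ a = -1.

Lemma pm1M a b : pm1 a -> pm1 b -> pm1 (a * b).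
Proof.
by move=> [->|[->|->]] [->|[->|->]]; rewrite /pm1;
  rewrite ?mul0r ?mulr0 ?mul1r ?mulr1 ?mulN1r ?mulrN1 ?opprK; auto.
Qed.

Lemma pm1N a : pm1 a -> pm1 (- a).
Proof. by move=> [->|[->|->]]; rewrite /pm1 ?oppr0 ?opprK; auto. Qed.

End Signs.

Section CircuitFlows.
Variables (R : realType) (m n : nat) (M : 'M[R]_(m, n)).
Hypothesis TU : totally_unimodular M.

Lemma circuit_flowN (d : 'rV[R]_n) : circuit_flow M d -> circuit_flow M (- d).
Proof.
move=> [fd [pd cd]]; split; [|split].
- by rewrite -scaleN1r; apply: in_flowsZ.
- by move=> e; rewrite mxE; apply: pm1N; apply: pd.
- by rewrite -scaleN1r supp_scale // oppr_eq0 oner_eq0.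
Qed.

Lemma circuit_flow_neq0 (d : 'rV[R]_n) : circuit_flow M d -> d != 0.
Proof.
move=> [_ [_ [/dependentP [v [nv [_ sv]]] _]]]; apply: contra nv => /eqP d0.
have : supp v \subset set0.
  by apply: subset_trans sv _; apply/subsetP => e; rewrite d0 inE mxE eqxx.
by rewrite subset0 => /eqP /supp0 ->.
Qed.

Lemma unimodular_coefficients k (f : 'I_k -> 'I_m) (g : 'I_k -> 'I_n) e0
    (s : 'rV[R]_k) :
  injective f -> injective g -> e0 \notin codom g -> \det (mxsub f g M) != 0 ->
  s *m (mxsub f g M)^T = \row_c M (f c) e0 -> forall j, pm1 (s 0 j).
Proof.
move=> finj ginj e0g detA0 sA j; set A := mxsub f g M in detA0 sA.
pose gj l := if l == j then e0 else g l.
have gjinj : injective gj.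
  have gne l : g l != e0 by apply: contraNneq e0g => <-; exact: codom_f.
  move=> l1 l2; rewrite /gj.
  case: eqP => [->|n1]; case: eqP => [->|n2] // E.
  - by case/eqP: (gne l2).
  - by case/eqP: (gne l1).
  - exact: ginj.
have detA : \det A = 1 \/ \det A = -1.
  by case: (TU finj ginj) => [E|]; first by rewrite E eqxx in detA0.
have -> : s 0 j = \det (mxsub f gj M) * \det A.
  have -> : mxsub f gj M = (repl A^T j (s *m A^T))^T.
    by rewrite sA; apply/matrixP => c r; rewrite !mxE /gj; case: eqP.
  by rewrite det_tr cramer det_tr -mulrA; case: detA => ->;
    rewrite ?mulrNN !mulr1.
by apply: (@pm1M R); [exact: (TU finj gjinj) | case: detA => ->; rewrite /pm1; auto].
Qed.

Lemma circuit_row_full (C : {set 'I_n}) e0 :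
  is_circuit M C -> e0 \in C -> row_full (colsubS M (C :\ e0)).
Proof.
move=> [_ minC] e0C; move/negP: (minC _ (properD1 e0C)).
by rewrite /dependent negbK /row_free /row_full mxrank_tr.
Qed.

Lemma flow_equation_split (y : 'rV[R]_n) e0 r : in_flows M y ->
  \sum_(e in supp y :\ e0) y 0 e * M r e = - (y 0 e0 * M r e0).
Proof.
move=> fy; have := congr1 (fun X : 'M[R]_(1, m) => X 0 r) fy; rewrite !mxE.
rewrite (bigD1 e0) //= => /eqP; rewrite addrC addr_eq0 [M^T e0 r]mxE => /eqP <-.
rewrite [RHS](bigID (mem (supp y))) /= [X in _ + X]big1 => [|e /andP [_]].
  by rewrite addr0; apply: eq_big => [e|e _]; rewrite ?mxE // !inE andbC.
by rewrite inE negbK => /eqP ->; rewrite mul0r.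
Qed.

Lemma circuit_ratio (y : 'rV[R]_n) e0 e :
  in_flows M y -> is_circuit M (supp y) -> e0 \in supp y ->
  pm1 (y 0 e / y 0 e0).
Proof.
move=> fy cy e0C; have y0nz : y 0 e0 != 0 by move: e0C; rewrite inE.
have [->|ne0] := eqVneq e e0; first by rewrite divff //; right; left.
have [eC'|eC'] := boolP (e \in supp y :\ e0); last first.
  have -> : y 0 e = 0 by apply/eqP; move: eC'; rewrite !inE ne0 /= negbK.
  by rewrite mul0r; left.
set C' := supp y :\ e0 in eC'; set k := #|C'|.
pose g (j : 'I_k) := enum_val j.
have rfC := circuit_row_full cy e0C; pose f := fullrankfun rfC.
have detA0 : \det (mxsub f g M) != 0.
  have -> : mxsub f g M = rowsub f (colsubS M C') by apply/matrixP => i j; rewrite !mxE.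
  by rewrite -unitfE -unitmxE; exact: fullrowsub_unit.
pose t : 'rV[R]_k := \row_j y 0 (g j).
have kerE r : \sum_j t 0 j * M r (g j) = - (y 0 e0 * M r e0).
  rewrite -(flow_equation_split e0 r fy) (big_enum_val (fun e' => y 0 e' * M r e')).
  by apply: eq_bigr => j _; rewrite mxE.
have e0g : e0 \notin codom g.
  apply/codomP => [[j E]]; rewrite /g /= in E.
  by move: (enum_valP j); rewrite -E !inE eqxx.
have sA : (- (y 0 e0)^-1 *: t) *m (mxsub f g M)^T = \row_c M (f c) e0.
  apply/rowP => c; rewrite !mxE -[RHS](mulKf y0nz) -[y 0 e0 * _]opprK -kerE.
  rewrite mulrN -mulNr mulr_sumr; apply: eq_bigr => j _.
  by rewrite !mxE mulrA.
have := unimodular_coefficients (@fullrankfun_inj _ _ _ _ rfC) (@enum_val_inj _ _)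
  e0g detA0 sA (enum_rank_in eC' e).
rewrite !mxE /g enum_rankK_in // => /pm1N.
by rewrite mulNr opprK mulrC.
Qed.

Lemma circuit_normalize (y : 'rV[R]_n) :
  in_flows M y -> is_circuit M (supp y) ->
  exists2 a : R, a != 0 & exists2 d, circuit_flow M d & y = a *: d.
Proof.
move=> fy cy.
have [e0 e0C] : exists e0, e0 \in supp y.
  apply: suppN0; apply: contraPneq cy.1 => ->.
  have -> : supp (0 : 'rV[R]_n) = set0 by apply/setP => e; rewrite !inE mxE eqxx.
  case/dependentP => v [nv [_]]; rewrite subset0 => /eqP /supp0 v0.
  by rewrite v0 eqxx in nv.
have y0nz : y 0 e0 != 0 by move: e0C; rewrite inE.
exists (y 0 e0) => //; exists ((y 0 e0)^-1 *: y); last first.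
  by rewrite scalerA divff // scale1r.
split; first exact: in_flowsZ.
split; last by rewrite supp_scale ?invr_eq0.
by move=> e; rewrite mxE mulrC; exact: circuit_ratio.
Qed.

End CircuitFlows.

Section Conformal.
Variables (R : realType) (m n : nat) (M : 'M[R]_(m, n)).
Implicit Types (d v y z : 'rV[R]_n).

Definition conf d y := forall e, d 0 e != 0 -> 0 < d 0 e * y 0 e.

Lemma conf_trans a b c : conf a b -> conf b c -> conf a c.
Proof.
move=> ab bc e ae; have h1 := ab e ae.
have be : b 0 e != 0 by apply: contraTneq h1 => ->; rewrite mulr0 ltxx.
have := mulr_gt0 h1 (bc e be).
rewrite (_ : a 0 e * b 0 e * (b 0 e * c 0 e) = a 0 e * c 0 e * (b 0 e * b 0 e)).
  by rewrite pmulr_lgt0 // -expr2 exprn_even_gt0.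
by ring.
Qed.

Lemma conf_supp d y : conf d y -> supp d \subset supp y.
Proof.
move=> c; apply/subsetP => e; rewrite !inE => de; have := c e de.
by apply: contraTneq => ->; rewrite mulr0 ltxx.
Qed.

(* Subtracting the largest multiple of v (supported in supp z) that keeps
   the signs of z kills some coordinate of supp v; the multiple is positive
   when v conforms to z. *)
Lemma conformal_reduce z v : v != 0 -> supp v \subset supp z ->
  exists t e1, [/\ e1 \in supp v, conf (z - t *: v) z, (z - t *: v) 0 e1 = 0
                 & conf v z -> 0 < t].
Proof.
move=> nv svz; have [e0 e0v] := suppN0 nv.
have [e1 e1v Hmin] := arg_minP (fun e => `|z 0 e / v 0 e|) e0v.
have {e1v}e1v : e1 \in supp v := e1v.
have v1 : v 0 e1 != 0 by move: e1v; rewrite inE.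
exists (z 0 e1 / v 0 e1), e1; split => //.
- move=> e; rewrite !mxE => ne.
  have [ve|ve] := eqVneq (v 0 e) 0.
    by rewrite ve mulr0 subr0 in ne *; rewrite -expr2 exprn_even_gt0.
  have ev : e \in supp v by rewrite inE.
  have ze : z 0 e != 0 by move: (subsetP svz e ev); rewrite inE.
  have small : `|z 0 e1 / v 0 e1 * v 0 e| <= `|z 0 e|.
    have := ler_wpM2r (normr_ge0 (v 0 e)) (Hmin e ev).
    by rewrite -!normrM mulfVK.
  have H3 : z 0 e1 / v 0 e1 * v 0 e * z 0 e <= z 0 e * z 0 e.
    apply: le_trans (ler_norm _) _; rewrite normrM -expr2 -real_normK ?num_real //.
    by rewrite expr2 ler_wpM2r.
  by rewrite lt_def mulf_neq0 //= mulrBl subr_ge0.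
- by rewrite !mxE mulfVK // subrr.
- move=> /(_ e1 v1) vz.
  rewrite (_ : z 0 e1 / v 0 e1 = v 0 e1 * z 0 e1 / v 0 e1 ^+ 2); last by field.
  by rewrite divr_gt0 // exprn_even_gt0.
Qed.

Lemma conf_supp_lt z' z e1 :
  conf z' z -> e1 \in supp z -> z' 0 e1 = 0 -> (#|supp z'| < #|supp z|)%N.
Proof.
move=> cz e1z z'0; apply: proper_card; apply/properP; split; first exact: conf_supp.
by exists e1 => //; rewrite inE z'0 eqxx.
Qed.

Lemma conf_scale d (a : R) : 0 < a -> conf d (a *: d).
Proof. by move=> a0 e de; rewrite mxE mulrCA -expr2 mulr_gt0 // exprn_even_gt0. Qed.

Hypothesis TU : totally_unimodular M.

(* every nonzero flow has a circuit flow conforming to it: by induction on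
   |supp z|, either supp z is a circuit, or a proper dependent subset of it
   supports a flow u and some z - t u conforms to z with smaller support *)
Lemma exists_conformal_circuit z :
  in_flows M z -> z != 0 -> exists2 d, circuit_flow M d & conf d z.
Proof.
have [k] := ubnP #|supp z|; elim: k z => // k IH z szk fz nz.
have [cz|ncz] := classic (is_circuit M (supp z)).
  have [a a0 [d cd ->]] := circuit_normalize TU fz cz.
  have [ha|ha|ha] := ltrgtP 0 a; last by rewrite ha eqxx in a0.
  - by exists d => //; exact: conf_scale.
  - exists (- d); first exact: circuit_flowN.
    by rewrite -[a *: d]opprK -scalerN -scaleNr; apply: conf_scale; rewrite oppr_gt0.
have [T pT dT] : exists2 T : {set 'I_n}, T \proper supp z & dependent M T.
  apply: NNPP => H; apply: ncz; split; first by apply/dependentP; exists z.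
  by move=> T pT dT; apply: H; exists T.
have [u [nu [fu suT]]] := (dependentP M T).1 dT.
have [sTz [e2 e2z e2T]] := properP pT.
have su : supp u \subset supp z := subset_trans suT sTz.
have [t [e1 [e1u cz' z'0 _]]] := conformal_reduce nu su.
have nz' : z - t *: u != 0.
  apply: contraTneq e2z => /rowP /(_ e2); rewrite !mxE inE.
  have -> : u 0 e2 = 0.
    by apply/eqP; apply: contraNT e2T => ue; apply: (subsetP suT); rewrite inE.
  by rewrite mulr0 subr0 => ->; rewrite eqxx.
have [|d cd dz'] := IH _ _ (in_flowsB fz (in_flowsZ t fu)) nz'.
  exact: leq_trans (conf_supp_lt cz' (subsetP su _ e1u) z'0) szk.
by exists d => //; apply: conf_trans cz'.
Qed.

Definition decomp_of (s : seq (R * 'rV[R]_n)) y :=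
  y = \sum_(p <- s) p.1 *: p.2 /\
  forall p, p \in s -> [/\ 0 <= p.1, circuit_flow M p.2 & conf p.2 y].

Lemma conformal_decomposition y : in_flows M y -> exists s, decomp_of s y.
Proof.
have [k] := ubnP #|supp y|; elim: k y => // k IH y syk fy.
have [->|ny] := eqVneq y 0; first by exists [::]; split => //; rewrite big_nil.
have [d cd dy] := exists_conformal_circuit fy ny.
have [t [e1 [e1d cy' y'0 /(_ dy) t0]]] :=
  conformal_reduce (circuit_flow_neq0 cd) (conf_supp dy).
have [|s [ys Hs]] := IH _ _ (in_flowsB fy (in_flowsZ t cd.1)).
  exact: leq_trans (conf_supp_lt cy' (subsetP (conf_supp dy) _ e1d) y'0) syk.
exists ((t, d) :: s); split; first by rewrite big_cons /= -ys addrC subrK.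
move=> p; rewrite inE => /orP [/eqP -> | ps]; first by split => //; exact: ltW.
by have [h1 h2 h3] := Hs p ps; split => //; apply: conf_trans h3 cy'.
Qed.

End Conformal.

Section CircuitInequalities.
Variables (R : realType) (m n : nat) (M : 'M[R]_(m, n)).
Implicit Types (d x y : 'rV[R]_n) (s : seq (R * 'rV[R]_n)).

Lemma decomp_abs s y : decomp_of M s y ->
  forall e, `|y 0 e| = \sum_(p <- s) p.1 * `|p.2 0 e|.
Proof.
move=> [ys Hs] e.
have yee : y 0 e = \sum_(p <- s) p.1 * p.2 0 e.
  by rewrite {1}ys summxE; apply: eq_bigr => p _; rewrite mxE.
have signs p : p \in s -> `|p.2 0 e| * `|y 0 e| = p.2 0 e * y 0 e.
  move=> ps; have [_ _ c] := Hs p ps.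
  have [->|pe] := eqVneq (p.2 0 e) 0; first by rewrite normr0 !mul0r.
  by rewrite -normrM gtr0_norm // c.
have [y0|ny] := eqVneq (y 0 e) 0.
  rewrite y0 normr0 big_seq big1 // => p ps; have [_ _ c] := Hs p ps.
  have [->|pe] := eqVneq (p.2 0 e) 0; first by rewrite normr0 mulr0.
  by have := c e pe; rewrite y0 mulr0 ltxx.
have nye : `|y 0 e| != 0 by rewrite normr_eq0.
apply: (mulIf nye); rewrite mulr_suml big_seq.
rewrite (eq_bigr (fun p : R * 'rV[R]_n => p.1 * p.2 0 e * y 0 e)) => [|p ps]; last first.
  by rewrite -mulrA -(signs p ps) mulrA.
by rewrite -big_seq -mulr_suml -yee -!expr2 real_normK ?num_real.
Qed.

Lemma l1_decomp s y : decomp_of M s y -> l1 y = \sum_(p <- s) p.1 * l1 p.2.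
Proof.
move=> D; rewrite /l1 (eq_bigr _ (fun e _ => decomp_abs D e)) exchange_big /=.
by apply: eq_bigr => p _; rewrite mulr_sumr.
Qed.

Lemma dotp_decomp s y x : decomp_of M s y -> dotp x y = \sum_(p <- s) p.1 * dotp x p.2.
Proof.
by move=> [ys _]; rewrite {1}ys dotp_sumr; apply: eq_bigr => p _; exact: dotpZr.
Qed.

Lemma l1_circ d : circuit_flow M d -> l1 d = normsq d.
Proof.
move=> [_ [pd _]]; rewrite /l1 /normsq /dotp; apply: eq_bigr => e _.
by case: (pd e) => [->|[->|->]];
  rewrite ?normr0 ?mulr0 ?normr1 ?mulr1 ?normrN1 ?mulrNN ?mulr1.
Qed.

Definition circ_ok x := forall d, circuit_flow M d -> 2 * dotp x d <= normsq d.

Lemma circ_ok_decomp s y x : circ_ok x -> decomp_of M s y -> 2 * dotp x y <= l1 y.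
Proof.
move=> ok D; rewrite (dotp_decomp x D) (l1_decomp D) mulr_sumr.
rewrite big_seq [X in _ <= X]big_seq; apply: ler_sum => p ps.
have [h1 h2 _] := D.2 p ps.
by rewrite mulrCA ler_wpM2l // l1_circ // ok.
Qed.

Lemma circ_ok_tight s y x : circ_ok x -> decomp_of M s y -> 2 * dotp x y = l1 y ->
  forall p, p \in s -> 0 < p.1 -> 2 * dotp x p.2 = normsq p.2.
Proof.
move=> ok D E.
have slack0 : \sum_(p <- s) p.1 * (normsq p.2 - 2 * dotp x p.2) = 0.
  rewrite big_seq
    (eq_bigr (fun p : R * 'rV[R]_n => p.1 * l1 p.2 - 2 * (p.1 * dotp x p.2)))
    => [|p ps]; last by rewrite l1_circ; [ring | have [] := D.2 p ps].
  rewrite sumrB -big_seq -mulr_sumr -big_seq -(l1_decomp D) -(dotp_decomp x D).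
  by rewrite E subrr.
move/eqP: slack0; rewrite big_seq psumr_eq0 => [/allP A p ps p1|p ps]; last first.
  by have [h1 h2 _] := D.2 p ps; rewrite mulr_ge0 // subr_ge0 ok.
have := A p ps; rewrite ps /= mulf_eq0 (gt_eqF p1) /= subr_eq0 => /eqP.
by move=> ->.
Qed.

Hypothesis TU : totally_unimodular M.

Lemma circ_ok_bound x y : circ_ok x -> in_flows M y -> 2 * dotp x y <= l1 y.
Proof.
move=> ok fy; have [s D] := conformal_decomposition TU fy; exact: circ_ok_decomp ok D.
Qed.

Lemma circ_in_lattice d : circuit_flow M d -> in_lattice M d.
Proof.
move=> [fd [pd _]]; split => // e.
by case: (pd e) => [->|[->|->]]; [exists 0 | exists 1 | exists (-1)]; rewrite ?rmorphN.
Qed.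

Lemma l1_lattice l : in_lattice M l -> l1 l <= normsq l.
Proof.
move=> [_ H]; rewrite /l1 /normsq /dotp; apply: ler_sum => e _.
have [z ->] := H e; rewrite -intr_norm -intrM ler_int.
by have [h|h] := lerP 0 z; [rewrite ger0_norm | rewrite ltr0_norm]; nia.
Qed.

Lemma V0_circuitsP x : V0 M x <-> in_flows M x /\ circ_ok x.
Proof.
have le_bisect l : (normsq x <= normsq (x - l)) = (2 * dotp x l <= normsq l).
  by rewrite normsqB; apply/idP/idP => h; lra.
split => [[fx H]|[fx ok]].
  by split => // d cd; rewrite -le_bisect; apply: H; exact: circ_in_lattice.
split => // l ll; rewrite le_bisect; apply: le_trans (l1_lattice ll).
exact: circ_ok_bound ok ll.1.
Qed.

End CircuitInequalities.

Section RealFacts.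
Variable R : realDomainType.

Lemma norm_sum_same_sign (I : finType) (P : pred I) (a : I -> R) :
  (forall i j, P i -> P j -> 0 <= a i * a j) ->
  `|\sum_(i | P i) a i| = \sum_(i | P i) `|a i|.
Proof.
move=> H; have [/existsP [i0 /andP [Pi0 ai0]]|N] := boolP [exists i, P i && (a i < 0)].
  have neg j : P j -> a j <= 0 by move=> Pj; have := H i0 j Pi0 Pj; nra.
  rewrite ler0_norm; last exact: sumr_le0.
  by rewrite -sumrN; apply: eq_bigr => j Pj; rewrite ler0_norm // neg.
have pos j : P j -> 0 <= a j.
  move=> Pj; rewrite leNgt; apply/negP => aj; move/existsP: N; apply.
  by exists j; rewrite Pj aj.
rewrite ger0_norm; last exact: sumr_ge0.
by apply: eq_bigr => j Pj; rewrite ger0_norm // pos.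
Qed.

Lemma norm_add_lt (a b : R) : a * b < 0 -> `|a + b| < `|a| + `|b|.
Proof.
move=> h; have [ha|ha] := lerP 0 a; have [hb|hb] := lerP 0 b;
  rewrite ?(ger0_norm ha) ?(ltr0_norm ha) ?(ger0_norm hb) ?(ltr0_norm hb);
  have [hab|hab] := lerP 0 (a + b);
  rewrite ?(ger0_norm hab) ?(ltr0_norm hab); nra.
Qed.

Lemma norm_pm (a b : R) : `|a| <= `|b| -> `|b + a| + `|b - a| = 2 * `|b|.
Proof.
have [ha|ha] := lerP 0 a; have [hb|hb] := lerP 0 b;
  rewrite ?(ger0_norm ha) ?(ltr0_norm ha) ?(ger0_norm hb) ?(ltr0_norm hb) => h;
  have [h1|h1] := lerP 0 (b + a); have [h2|h2] := lerP 0 (b - a);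
  rewrite ?(ger0_norm h1) ?(ltr0_norm h1) ?(ger0_norm h2) ?(ltr0_norm h2); lra.
Qed.

End RealFacts.

Lemma uniform_margin (R : realFieldType) (I : eqType) (s : seq I)
    (P : I -> Prop) (a b : I -> R) :
  (forall i, P i -> 0 < a i) ->
  exists2 t, 0 < t & forall i, i \in s -> P i -> t * `|b i| <= a i.
Proof.
move=> apos; elim: s => [|c s [t0 t0p H0]]; first by exists 1.
have [Pc|nPc] := classic (P c); last first.
  by exists t0 => // i; rewrite inE => /orP [/eqP -> /nPc|/H0].
pose tc := a c / (`|b c| + 1).
have b0 := normr_ge0 (b c); have ac := apos c Pc.
have tcp : 0 < tc by rewrite divr_gt0 //; lra.
have tcb : tc * `|b c| <= a c.
  rewrite /tc mulrAC ler_pdivrMr; last lra.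
  by rewrite ler_wpM2l ?ltW //; lra.
exists (Num.min t0 tc) => [|i]; first by rewrite lt_min t0p tcp.
have m1 : Num.min t0 tc <= t0 by rewrite ge_min lexx.
have m2 : Num.min t0 tc <= tc by rewrite ge_min lexx orbT.
rewrite inE => /orP [/eqP -> _|/H0 Hi /Hi]; first exact: le_trans (ler_wpM2r b0 m2) tcb.
exact: le_trans (ler_wpM2r (normr_ge0 _) m1).
Qed.

Section Face.
Variables (R : realType) (m n : nat) (M : 'M[R]_(m, n)).
Hypothesis TU : totally_unimodular M.
Variables (F : 'rV[R]_n -> Prop) (cF : 'rV[R]_n) (bF : R).
Hypothesis V0_le : forall x, V0 M x -> dotp cF x <= bF.
Hypothesis FP : forall x, F x <-> (V0 M x /\ dotp cF x = bF).
Variable x1 : 'rV[R]_n.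
Hypothesis Fx1 : F x1.
Implicit Types (d g x y z v : 'rV[R]_n).

(* {0,1,-1} vectors are encoded by a finite type of sign patterns, which
   makes U(F) a finite set *)
Definition signs := {ffun 'I_n -> 'I_3}.
Definition of_signs (c : signs) : 'rV[R]_n :=
  \row_e (match nat_of_ord (c e) with 0 => 0 | 1 => 1 | _ => -1 end).

Lemma of_signs_surj d : (forall e, pm1 (d 0 e)) -> exists c, of_signs c = d.
Proof.
move=> pd; exists [ffun e => if d 0 e == 0 then ord0
                            else if d 0 e == 1 then inord 1 else inord 2].
apply/rowP => e; rewrite !mxE ffunE.
have h : (-1 : R) != 1 by apply/eqP; lra.
by case: (pd e) => [->|[->|->]]; rewrite ?eqxx ?oppr_eq0 ?oner_eq0 ?(negPf h) ?inordK.
Qed.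

Definition Uc : {set signs} := [set c | `[< Ucirc M F (of_signs c) >]].

Lemma UcP c : reflect (Ucirc M F (of_signs c)) (c \in Uc).
Proof. by rewrite inE; apply: asboolP. Qed.

Lemma Ucirc_of_signs g : Ucirc M F g -> exists2 c, c \in Uc & of_signs c = g.
Proof.
move=> U; have [c E] := of_signs_surj U.1.2.1; exists c => //.
by apply/UcP; rewrite E.
Qed.

Lemma F_flows x : F x -> in_flows M x.
Proof. by move/FP => [/(V0_circuitsP TU) []]. Qed.

Lemma F_circ_ok x : F x -> circ_ok M x.
Proof. by move/FP => [/(V0_circuitsP TU) []]. Qed.

Lemma Uc_circ c : c \in Uc -> circuit_flow M (of_signs c).
Proof. by move/UcP => []. Qed.

Lemma Uc_tight c x : c \in Uc -> F x -> 2 * dotp x (of_signs c) = normsq (of_signs c).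
Proof. by move/UcP => [_ H] /H []. Qed.

(* two circuit flows of U(F) never have opposite signs: otherwise their sum
   would violate the bound 2 <x1, y> <= |y|_1 *)
Lemma Uc_sign_consistent c c' e :
  c \in Uc -> c' \in Uc -> 0 <= of_signs c 0 e * of_signs c' 0 e.
Proof.
move=> cU c'U; rewrite leNgt; apply/negP => neg.
set g := of_signs c in neg *; set g' := of_signs c' in neg *.
have cg := Uc_circ cU; have cg' := Uc_circ c'U.
have := circ_ok_bound TU (F_circ_ok Fx1) (in_flowsD cg.1 cg'.1).
rewrite dotpDr mulrDr (Uc_tight cU Fx1) (Uc_tight c'U Fx1) -(l1_circ cg) -(l1_circ cg').
suff : l1 (g + g') < l1 g + l1 g' by lra.
rewrite /l1 -big_split /= -subr_gt0 -sumrB (bigD1 e) //= ltr_pwDl //.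
  by rewrite [(g + g') 0 e]mxE subr_gt0; exact: norm_add_lt.
by apply: sumr_ge0 => i _; rewrite [(g + g') 0 i]mxE subr_ge0 ler_normD.
Qed.

Definition w : 'rV[R]_n := \sum_(c in Uc) of_signs c.

Lemma w_abs e : `|w 0 e| = \sum_(c in Uc) `|of_signs c 0 e|.
Proof.
by rewrite summxE norm_sum_same_sign // => c c' cU c'U; exact: Uc_sign_consistent.
Qed.

Lemma w_flow : in_flows M w.
Proof. by rewrite /in_flows mulmx_suml big1 // => c /Uc_circ []. Qed.

Lemma tight_w x : F x -> 2 * dotp x w = l1 w.
Proof.
move=> Fx; rewrite /l1 (eq_bigr _ (fun e _ => w_abs e)) exchange_big /=.
rewrite dotp_sumr mulr_sumr; apply: eq_bigr => c cU.
by rewrite (Uc_tight cU Fx) -(l1_circ (Uc_circ cU)).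
Qed.

Lemma phiS_w e : e \in phiS M F -> 1 <= `|w 0 e|.
Proof.
rewrite inE => /asboolP [g [U ge]]; have [c cU E] := Ucirc_of_signs U.
rewrite w_abs (bigD1 c) //= -[X in X <= _]addr0 lerD //.
  by rewrite E; case: (U.1.2.1 e) ge => [->|[->|->]]; rewrite ?eqxx ?normrN1 ?normr1.
by apply: sumr_ge0 => i _; exact: normr_ge0.
Qed.

Lemma supp_Uc c : c \in Uc -> supp (of_signs c) \subset phiS M F.
Proof.
move=> cU; apply/subsetP => e ne; rewrite inE; apply/asboolP.
by exists (of_signs c); split; [apply/UcP | rewrite inE in ne].
Qed.

Definition BU : 'M[R]_(#|{: signs}|, n) :=
  \matrix_(i, e) (if enum_val i \in Uc then of_signs (enum_val i) 0 e else 0).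

Lemma row_BU i : row i BU = if enum_val i \in Uc then of_signs (enum_val i) else 0.
Proof. by apply/rowP => e; rewrite !mxE; case: ifP => //; rewrite mxE. Qed.

Lemma Uc_sub c : c \in Uc -> (of_signs c <= BU)%MS.
Proof.
move=> cU; apply: (eq_row_sub (enum_rank c)).
by rewrite row_BU enum_rankK cU.
Qed.

(* a flow y that is tight on F lies in the span of U(F): every circuit of a
   conformal decomposition of y is tight on F, hence belongs to U(F) *)
Lemma tight_flow_in_span y :
  in_flows M y -> (forall x, F x -> 2 * dotp x y = l1 y) -> (y <= BU)%MS.
Proof.
move=> fy tight; have [s D] := conformal_decomposition TU fy.
rewrite D.1 big_seq; apply: summx_sub => p ps; have [p0 cp _] := D.2 p ps.
have [->|pn] := eqVneq p.1 0; first by rewrite scale0r sub0mx.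
apply: scalemx_sub; have p1 : 0 < p.1 by rewrite lt_def pn.
have [|c cU <-] := Ucirc_of_signs (g := p.2); last exact: Uc_sub.
split => // x Fx; split; first exact: F_flows.
by apply: (circ_ok_tight (F_circ_ok Fx) D (tight x Fx) ps).
Qed.

(* every flow supported in S lies in the span of U(F): for small t > 0 both
   w + t z and w - t z are flows with the signs of w, whose l1 norms add up
   to 2 |w|_1, so both are tight on F *)
Lemma supported_flow_in_span z :
  in_flows M z -> supp z \subset phiS M F -> (z <= BU)%MS.
Proof.
move=> fz sz; pose t := (1 + l1 z)^-1.
have l0 := l1_ge0 z.
have t0 : 0 < t by rewrite invr_gt0; lra.
have small e : `|t * z 0 e| <= `|w 0 e|.
  have [eS|eS] := boolP (e \in phiS M F).
    apply: le_trans (phiS_w eS); rewrite normrM (gtr0_norm t0).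
    apply: le_trans (ler_wpM2l (ltW t0) (abs_le_l1 z e)) _.
    by rewrite /t mulrC ler_pdivrMr; lra.
  have -> : z 0 e = 0.
    by apply/eqP; apply: contraNT eS => ze; apply: (subsetP sz); rewrite inE.
  by rewrite mulr0 normr0.
pose yp := w + t *: z; pose ym := w - t *: z.
have fyp : in_flows M yp by apply: in_flowsD w_flow (in_flowsZ t fz).
have fym : in_flows M ym by apply: in_flowsB w_flow (in_flowsZ t fz).
have l1_sum : l1 yp + l1 ym = 2 * l1 w.
  rewrite /l1 -big_split mulr_sumr /=; apply: eq_bigr => e _.
  by rewrite !mxE norm_pm // -mulNr.
have tight x : F x -> 2 * dotp x yp = l1 yp.
  move=> Fx; have ok := F_circ_ok Fx.
  have := circ_ok_bound TU ok fyp; have := circ_ok_bound TU ok fym.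
  have := tight_w Fx; rewrite /ym /yp dotpBr dotpDr; lra.
have -> : z = t^-1 *: (yp - w) by rewrite /yp addrC addKr scalerA mulVf ?gt_eqF ?scale1r.
apply/scalemx_sub/addmx_sub; first exact: tight_flow_in_span.
rewrite -scaleN1r; apply: scalemx_sub; apply: summx_sub => c cU; exact: Uc_sub.
Qed.

Lemma rank_BU : \rank BU = genus M (phiS M F) (phiEps M F).
Proof.
apply: rank_supported_flows => [i|z]; last exact: supported_flow_in_span.
rewrite row_BU; case: ifP => [cU|_]; last first.
  by split; [exact: mul0mx | apply/subsetP => e; rewrite inE mxE eqxx].
by split; [exact: (Uc_circ cU).1 | exact: supp_Uc].
Qed.

Lemma F_mid x y : F x -> F y -> F (2^-1 *: (x + y)).
Proof.
move=> Fx Fy; apply/FP; split.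
  apply/(V0_circuitsP TU); split; first by apply/in_flowsZ/in_flowsD; exact: F_flows.
  move=> d cd; rewrite dotpZl dotpDl.
  by have := F_circ_ok Fx cd; have := F_circ_ok Fy cd; lra.
have [_ cx] := (FP x).1 Fx; have [_ cy] := (FP y).1 Fy.
by rewrite dotpZr dotpDr cx cy; field.
Qed.

Definition strict_outside xs := forall c, circuit_flow M (of_signs c) ->
  c \notin Uc -> 2 * dotp xs (of_signs c) < normsq (of_signs c).

(* averaging finitely many witnesses gives a point of F strict outside U(F) *)
Lemma exists_strict_point : exists2 xs, F xs & strict_outside xs.
Proof.
suff [xs Fxs H] : exists2 xs, F xs & forall c, c \in enum {: signs} ->
    circuit_flow M (of_signs c) -> c \notin Uc ->
    2 * dotp xs (of_signs c) < normsq (of_signs c).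
  by exists xs => // c; apply: H; exact: mem_enum.
elim: (enum _) => [|c s [x Fx Hx]]; first by exists x1.
have [[cc cU]|nb] := classic (circuit_flow M (of_signs c) /\ c \notin Uc); last first.
  exists x => // c'; rewrite inE => /orP [/eqP -> cc cU|]; [by case: nb | exact: Hx].
have [xc Fxc sc] : exists2 xc, F xc & 2 * dotp xc (of_signs c) < normsq (of_signs c).
  apply: NNPP => H; move/negP: cU; apply; apply/UcP; split => // y Fy.
  split; first exact: F_flows.
  have := F_circ_ok Fy cc; rewrite le_eqVlt => /orP [/eqP //|lt].
  by case: H; exists y.
exists (2^-1 *: (x + xc)); first exact: F_mid.
move=> c'; rewrite inE dotpZl dotpDl => /orP [/eqP -> _ _|c's cc' c'U].
  by have := F_circ_ok Fx cc; lra.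
by have := Hx c' c's cc' c'U; have := F_circ_ok Fxc cc'; lra.
Qed.

(* D = ker M cap (span U(F))^perp, the direction space of F *)
Definition Dm : 'M[R]_n := kermx (col_mx M BU)^T.

Lemma DmP v :
  (v <= Dm)%MS <-> in_flows M v /\ forall c, c \in Uc -> dotp v (of_signs c) = 0.
Proof.
have BUT i : (v *m BU^T) 0 i =
    if enum_val i \in Uc then dotp v (of_signs (enum_val i)) else 0.
  rewrite mxE; case: ifP => cU; first by apply: eq_bigr => e _; rewrite !mxE cU.
  by rewrite big1 // => e _; rewrite !mxE cU mulr0.
rewrite /Dm; split.
  move/sub_kermxP; rewrite tr_col_mx mul_mx_row => /eqP.
  rewrite row_mx_eq0 => /andP [/eqP fv /eqP ov]; split => // c cU.
  by have := BUT (enum_rank c); rewrite ov enum_rankK cU mxE.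
move=> [fv ov]; apply/sub_kermxP; rewrite tr_col_mx mul_mx_row fv.
suff -> : v *m BU^T = 0 by rewrite row_mx0.
by apply/rowP => i; rewrite BUT mxE; case: ifP => // cU; exact: ov.
Qed.

Lemma face_directions_in_D xs x : F xs -> F x -> (x - xs <= Dm)%MS.
Proof.
move=> Fxs Fx; apply/DmP; split; first exact: in_flowsB (F_flows Fx) (F_flows Fxs).
move=> c cU; rewrite dotpBl.
by have := Uc_tight cU Fx; have := Uc_tight cU Fxs; rewrite (dotpC x) (dotpC xs); lra.
Qed.

(* from a point strict outside U(F), F extends a little in every direction
   of D: small moves along v keep all circuit inequalities, and the
   supporting inequality must then stay tight *)
Lemma D_directions_in_face xs v : F xs -> strict_outside xs -> (v <= Dm)%MS ->
  exists2 t, 0 < t & F (xs + t *: v).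
Proof.
move=> Fxs sxs /DmP [fv ov].
have slack c : circuit_flow M (of_signs c) /\ c \notin Uc ->
    0 < normsq (of_signs c) - 2 * dotp xs (of_signs c).
  by move=> [cc cU]; rewrite subr_gt0; exact: sxs.
have [t t0 Ht] := @uniform_margin _ _ (enum {: signs})
  (fun c => circuit_flow M (of_signs c) /\ c \notin Uc)
  (fun c => normsq (of_signs c) - 2 * dotp xs (of_signs c))
  (fun c => 2 * dotp v (of_signs c))
  slack.
have V0_move sg : sg = 1 \/ sg = -1 -> V0 M (xs + (sg * t) *: v).
  move=> hs; apply/(V0_circuitsP TU); split.
    by apply: in_flowsD (F_flows Fxs) (in_flowsZ _ fv).
  move=> d cd; have [c E] := of_signs_surj cd.2.1; rewrite -E in cd *.
  rewrite dotpDl dotpZl.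
  have [cU|cU] := boolP (c \in Uc).
    by rewrite ov // mulr0 addr0; apply: (F_circ_ok Fxs).
  have := Ht c (mem_enum _ c) (conj cd cU).
  have := ler_norm (2 * dotp v (of_signs c)).
  have := ler_norm (- (2 * dotp v (of_signs c))); rewrite normrN.
  by case: hs => ->; nra.
have V0p := V0_move 1 (or_introl erefl); have V0m := V0_move (-1) (or_intror erefl).
exists t => //; apply/FP; split; first by rewrite mul1r in V0p.
have := V0_le V0p; have := V0_le V0m.
have [_ cxs] := (FP xs).1 Fxs.
by rewrite !dotpDr !dotpZr cxs; nra.
Qed.

Lemma D_in_affine_span xs (U : 'M[R]_n) : F xs -> strict_outside xs ->
  (forall x, F x -> (x - xs <= U)%MS) -> (Dm <= U)%MS.
Proof.
move=> Fxs sxs HU; apply/row_subP => i.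
have [t t0 Fv] := D_directions_in_face Fxs sxs (row_sub i Dm).
have := HU _ Fv; rewrite addrC addKr => /(scalemx_sub t^-1).
by rewrite scalerA mulVf ?gt_eqF // scale1r.
Qed.

(* the row space of M meets the span of U(F) trivially, as flows are
   orthogonal to the rows of M *)
Lemma rowspace_cap_BU : \rank (M :&: BU)%MS = 0%N.
Proof.
apply/eqP; rewrite mxrank_eq0; apply/eqP/row_matrixP => i; rewrite row0.
set v := row i (M :&: BU)%MS.
have vM : (v <= M)%MS := submx_trans (row_sub i _) (capmxSl M BU).
have vB : (v <= BU)%MS := submx_trans (row_sub i _) (capmxSr M BU).
have BU_ker : BU *m M^T = 0.
  apply/row_matrixP => j; rewrite row_mul row_BU row0.
  by case: ifP => [cU|_]; [exact: (Uc_circ cU).1 | rewrite mul0mx].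
have vk : v *m M^T = 0 by case/submxP: vB => u ->; rewrite -mulmxA BU_ker mulmx0.
apply: normsq_eq0; rewrite /normsq dotpE.
case/submxP: vM => u {1}->; rewrite -mulmxA -[M *m _]trmxK trmx_mul trmxK vk.
by rewrite trmx0 mulmx0 mxE.
Qed.

Lemma rank_D : (\rank Dm + \rank BU)%N = dim_flows M.
Proof.
rewrite /dim_flows /Dm !mxrank_ker !mxrank_tr.
have := mxrank_sum_cap M BU; rewrite rowspace_cap_BU addsmxE addn0 => rank_col.
have := rank_leq_col (col_mx M BU); rewrite rank_col; lia.
Qed.

End Face.

(* The affine hull of F is xs + D for a point xs of F strict outside U(F),
   and dim D = dim ker M - rank span U(F) = dim ker M - genus(phi(F)). *)
Theorem mainTheorem18 (R : realType) (m n : nat) (M : 'M[R]_(m, n)) :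
  totally_unimodular M ->
  forall F : 'rV[R]_n -> Prop,
    is_face (V0 M) F -> (exists x, F x) ->
    codim_in_flows M F (genus M (phiS M F) (phiEps M F)).
Proof.
move=> TU F [cF [bF [V0_le FP]]] [x1 Fx1].
have [xs Fxs sxs] := exists_strict_point TU FP Fx1.
exists (\rank (Dm M F)); split; last by rewrite -(rank_BU TU FP Fx1) rank_D.
exists xs => //; split.
  by exists (Dm M F); split => // x Fx; exact: (face_directions_in_D TU FP Fxs Fx).
by move=> U HU; apply: mxrankS; exact: (D_in_affine_span TU V0_le FP Fxs sxs HU).
Qed.
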